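(* Let $\mathbb{K}=(K,+,\times,0,1)$ be a semiring, let $A=(\Sigma,Q,\nu,\delta)$ be a RWTA with weights in $K$, and let $\sim$ be an equivalence relation on $Q$ that is down compatible with $A$. Then $\mathbb{P}_A=\mathbb{P}_{A_\sim}$.
   Context: A graded alphabet is a finite set $\Sigma=\bigcup_{k\in\mathbb{N}}\Sigma_k$; $T_\Sigma$ is the set of trees $f(t_1,\ldots,t_k)$ with $f\in\Sigma_k$. A RWTA with weights in $K$ is $A=(\Sigma,Q,\nu,\delta)$ with $Q$ finite, $\nu:Q\to K$, $\delta\subseteq\bigcup_k Q\times\Sigma_k\times Q^k$. Write $\delta(f,q_1,\ldots,q_k)=\{q\mid(q,f,q_1,\ldots,q_k)\in\delta\}$, extended to subsets by union over tuples; $\nu(S)=\sum_{s\in S}\nu(s)$ ($\nu(\emptyset)=0$); $\Delta(f(t_1,\ldots,t_k))=\delta(f,\Delta(t_1),\ldots,\Delta(t_k))$; $\mathbb{P}_A(t)=\nu(\Delta(t))$. The down language of $q$ is $L_q(A)=\{t\in T_\Sigma\mid q\in\Delta(t)\}$. An equivalence relation $\sim$ on $Q$ is down compatible with $A$ if $q_1\sim q_2$ implies $L_{q_1}(A)=L_{q_2}(A)$. The quotient of $A$ by an equivalence relation $\sim$ on $Q$ is the RWTA $A_\sim=(\Sigma,Q_\sim,\nu',\delta')$, where $Q_\sim$ is the set of equivalence classes, $\nu'(C)=\sum_{q\in C}\nu(q)$, and for classes $C_1,\ldots,C_{k+1}$ and $f\in\Sigma_k$, $C_{k+1}\in\delta'(f,C_1,\ldots,C_k)$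 iff there exist $q_i\in C_i$ ($1\le i\le k+1$) with $q_{k+1}\in\delta(f,q_1,\ldots,q_k)$. *)

From HB Require Import structures.
From mathcomp Require Import all_boot all_order all_algebra.
Set Implicit Arguments. Unset Strict Implicit. Unset Printing Implicit Defensive.
Import GRing.Theory.
Local Open Scope ring_scope.

(* A raw tree is a node labelled by a symbol with a list of children;
   T_Sigma is the set of raw trees with [wf ar] (each node has exactly
   [ar f] children). *)
Inductive tree (Sigma : Type) : Type := Node of Sigma & seq (tree Sigma).
Arguments Node {Sigma}.

Fixpoint wf (Sigma : Type) (ar : Sigma -> nat) (t : tree Sigma) : bool :=
  match t with Node f ts => (size ts == ar f) && all (wf ar) ts end.

(* An RWTA over Sigma with state set Q (a finType) and weights in K is given by
   nu : Q -> K and the transition relation delta, encoded as a boolean predicate: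
   delta q f [:: q1; ...; qk] holds iff (q, f, q1, ..., qk) is a transition
   (only lists of length ar f are meaningful). *)

Definition deltaS (Sigma : Type) (Q : finType) (delta : Q -> Sigma -> seq Q -> bool)
  (f : Sigma) (Ss : seq {set Q}) : {set Q} :=
  [set q | [exists qs : (size Ss).-tuple Q,
              all2 (fun q' (S : {set Q}) => q' \in S) qs Ss && delta q f qs]].

Fixpoint Delta (Sigma : Type) (Q : finType) (delta : Q -> Sigma -> seq Q -> bool)
  (t : tree Sigma) : {set Q} :=
  match t with Node f ts => deltaS delta f (map (Delta delta) ts) end.

Definition nuS (K : pzSemiRingType) (Q : finType) (nu : Q -> K) (S : {set Q}) : K :=
  \sum_(q in S) nu q.

Definition PA (Sigma : Type) (K : pzSemiRingType) (Q : finType) (nu : Q -> K)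
  (delta : Q -> Sigma -> seq Q -> bool) (t : tree Sigma) : K :=
  nuS nu (Delta delta t).

Definition down_lang (Sigma : Type) (ar : Sigma -> nat) (Q : finType)
  (delta : Q -> Sigma -> seq Q -> bool) (q : Q) : tree Sigma -> Prop :=
  fun t => wf ar t /\ q \in Delta delta t.

Definition down_compatible (Sigma : Type) (ar : Sigma -> nat) (Q : finType)
  (delta : Q -> Sigma -> seq Q -> bool) (e : rel Q) : Prop :=
  forall q1 q2, e q1 q2 -> forall t, down_lang ar delta q1 t <-> down_lang ar delta q2 t.

Definition classes (Q : finType) (e : rel Q) : {set {set Q}} :=
  equivalence_partition e [set: Q].

Definition qstate (Q : finType) (e : rel Q) : finType :=
  {C : {set Q} | C \in classes e}.

Definition qnu (K : pzSemiRingType) (Q : finType) (e : rel Q) (nu : Q -> K)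
  (C : qstate e) : K := \sum_(q in val C) nu q.

Definition qdelta (Sigma : Type) (Q : finType) (e : rel Q)
  (delta : Q -> Sigma -> seq Q -> bool)
  (C : qstate e) (f : Sigma) (Cs : seq (qstate e)) : bool :=
  [exists qs : (size Cs).-tuple Q,
     [exists q in val C,
        all2 (fun q' (C' : qstate e) => q' \in val C') qs Cs && delta q f qs]].

From mathcomp Require Import all_boot all_order all_algebra.
Set Implicit Arguments. Unset Strict Implicit. Unset Printing Implicit Defensive.
Local Open Scope ring_scope.

(* Down compatibility makes every Delta(t) saturated, i.e. a union of classes.
   On saturated arguments one transition step of the quotient sends the class
   images of the argument sets to the class image of the successor set, so by
   induction the quotient run on t is the set of classes of the states in
   Delta(t).  Summing nu over a saturated set class by class gives nu'. *)

Fixpoint tree_nested_ind (Sigma : Type) (P : tree Sigma -> Prop)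
  (IH : forall f ts, foldr (fun t acc => P t /\ acc) True ts -> P (Node f ts))
  (t : tree Sigma) : P t :=
  match t with Node f ts => IH f ts
    ((fix loop (ts : seq (tree Sigma)) : foldr (fun t acc => P t /\ acc) True ts :=
       match ts with [::] => I | t :: ts' => conj (tree_nested_ind IH t) (loop ts') end)
     ts) end.

Lemma all2_mapl (S T U : Type) (r : U -> T -> bool) (f : S -> U) s t :
  all2 r (map f s) t = all2 (fun x y => r (f x) y) s t.
Proof. by elim: s t => [|x s IH] [|y t] //=; rewrite IH. Qed.

Lemma all2_mapr (S T U : Type) (r : S -> U -> bool) (f : T -> U) s t :
  all2 r s (map f t) = all2 (fun x y => r x (f y)) s t.
Proof. by elim: s t => [|x s IH] [|y t] //=; rewrite IH. Qed.

Lemma all2_diag (T : Type) (r : T -> T -> bool) (s : seq T) :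
  all2 r s s = all (fun x => r x x) s.
Proof. by elim: s => //= x s ->. Qed.

Lemma sub_all2 (S T : Type) (r r' : S -> T -> bool) s t :
  (forall x y, r x y -> r' x y) -> all2 r s t -> all2 r' s t.
Proof. by move=> rr'; elim: s t => [|x s IH] [|y t] //= /andP[/rr'-> /IH]. Qed.

Lemma all2_trans_in (S T U : eqType) (r : S -> T -> bool) (r' : T -> U -> bool)
    (r'' : S -> U -> bool) (s : seq S) (t : seq T) (u : seq U) :
  {in u, forall z x y, r x y -> r' y z -> r'' x z} ->
  all2 r s t -> all2 r' t u -> all2 r'' s u.
Proof.
elim: s t u => [|x s IH] [|y t] [|z u] //= ruz /andP[rxy rst] /andP[ryz rtu].
rewrite (ruz z (mem_head _ _) x y) //=.
by apply: IH rst rtu => z' uz'; apply: ruz; rewrite inE uz' orbT.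
Qed.

Lemma exists_tuple_all2 (T S : Type) (r : T -> S -> bool) (P : seq T -> bool)
    (Ss : seq S) :
  (exists qs : (size Ss).-tuple T, all2 r qs Ss && P qs) <->
  (exists qs : seq T, all2 r qs Ss && P qs).
Proof.
split=> [[qs H]|[qs /andP[rqs Pqs]]]; first by exists qs.
have size_qs : size qs == size Ss by move: rqs; rewrite all2E => /andP[].
by exists (Tuple size_qs); rewrite /= rqs Pqs.
Qed.

Section OneStep.

Variables (Sigma : Type) (Q : finType) (delta : Q -> Sigma -> seq Q -> bool).

Lemma mem_deltaS f Ss q :
  q \in deltaS delta f Ss <->
  exists qs : seq Q, all2 (fun q' (S : {set Q}) => q' \in S) qs Ss && delta q f qs.
Proof.
rewrite inE; split=> [/existsP H|H]; first exact/exists_tuple_all2.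
apply/existsP.
by apply/(exists_tuple_all2 (fun q' (S : {set Q}) => q' \in S) (delta q f)).
Qed.

Variable e : rel Q.

Lemma qdeltaE C f Cs :
  qdelta delta C f Cs <-> exists qs : seq Q, exists2 q, q \in val C &
     all2 (fun q' (C' : qstate e) => q' \in val C') qs Cs && delta q f qs.
Proof.
rewrite /qdelta; split=> [/existsP[qs /existsP[q /andP[Cq H]]]|[qs [q Cq H]]].
  by exists qs, q.
apply/existsP; have /exists_tuple_all2[qs' /andP[qs'Cs dq]] : exists qs : seq Q,
    all2 (fun q' (C' : qstate e) => q' \in val C') qs Cs && delta q f qs by exists qs.
by exists qs'; apply/existsP; exists q; rewrite Cq qs'Cs.
Qed.

End OneStep.

Section Quotient.

Variables (Q : finType) (e : rel Q).
Hypothesis e_equiv : equivalence_rel e.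

Let classes_partition : partition (classes e) [set: Q].
Proof. exact: equivalence_partitionP (in3W e_equiv). Qed.

Lemma pblock_classes q : pblock (classes e) q \in classes e.
Proof. by apply: pblock_mem; rewrite (cover_partition classes_partition) inE. Qed.

Definition cls q : qstate e := exist _ (pblock (classes e) q) (pblock_classes q).

Lemma mem_cls q (C : qstate e) : (q \in val C) = (cls q == C).
Proof.
have [/eqP cover_classes triv_classes _] := and3P classes_partition.
apply/idP/eqP=> [Cq|<-]; last by rewrite mem_pblock cover_classes inE.
by apply: val_inj; apply: def_pblock => //; exact: (valP C).
Qed.

Lemma mem_cls_self q : q \in val (cls q).
Proof. by rewrite mem_cls. Qed.

Lemma eq_clsP p q : reflect (e p q) (cls p == cls q).
Proof.
rewrite eq_sym -mem_cls /= pblock_equivalence_partition ?inE //.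
exact: idP.
Qed.

Definition saturated (S : {set Q}) := forall p q, e p q -> p \in S -> q \in S.

Lemma mem_imset_cls S q : saturated S -> (cls q \in cls @: S) = (q \in S).
Proof.
move=> satS; apply/imsetP/idP=> [[p Sp /eqP]|Sq]; last by exists q.
by rewrite eq_sym => /eq_clsP/satS; apply.
Qed.

Lemma sum_saturated (K : pzSemiRingType) (nu : Q -> K) S : saturated S ->
  \sum_(q in S) nu q = \sum_(C in cls @: S) \sum_(q in val C) nu q.
Proof.
move=> satS; rewrite (partition_big_imset cls); apply: eq_bigr => _ /imsetP[p Sp ->].
apply: eq_bigl => q; rewrite mem_cls andb_idl // eq_sym => /eq_clsP/satS.
exact.
Qed.

End Quotient.

Section QuotientAutomaton.

Variables (Sigma : Type) (Q : finType) (delta : Q -> Sigma -> seq Q -> bool).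
Variables (e : rel Q) (e_equiv : equivalence_rel e).

Local Notation cls := (cls e_equiv).

Lemma deltaS_quotient f (Ss : seq {set Q}) : {in Ss, forall S, saturated e S} ->
  deltaS (qdelta delta) f [seq cls @: A | A : {set Q} <- Ss] = cls @: deltaS delta f Ss.
Proof.
move=> satSs; apply/setP=> C; apply/idP/idP.
  move=> /mem_deltaS[Cs /andP[CsSs /qdeltaE[qs [q]]]].
  rewrite mem_cls => /eqP <- /andP[qsCs dq]; apply: imset_f; apply/mem_deltaS.
  exists qs; rewrite dq andbT; rewrite all2_mapr in CsSs.
  apply: all2_trans_in qsCs CsSs => S /satSs satS q' C'.
  by rewrite mem_cls => /eqP <-; rewrite mem_imset_cls.
move=> /imsetP[q /mem_deltaS[qs /andP[qsSs dq]] ->]; apply/mem_deltaS.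
exists (map cls qs); rewrite all2_mapl all2_mapr (sub_all2 _ qsSs); last first.
  by move=> q' S; apply: imset_f.
apply/qdeltaE; exists qs; exists q; rewrite ?mem_cls_self // all2_mapr dq andbT.
by rewrite all2_diag; apply/allP => q' _; apply: mem_cls_self.
Qed.

Variable ar : Sigma -> nat.
Hypothesis e_down : down_compatible ar delta e.

Lemma saturated_Delta t : wf ar t -> saturated e (Delta delta t).
Proof. by move=> wt p q epq Dp; have [/(_ (conj wt Dp))[]] := e_down epq t. Qed.

Lemma Delta_quotient t : wf ar t -> Delta (qdelta delta) t = cls @: Delta delta t.
Proof.
elim/tree_nested_ind: t => f ts IH /= /andP[_ wts].
have -> : map (Delta (qdelta delta)) ts =
           [seq cls @: A | A : {set Q} <- map (Delta delta) ts].
  by elim: ts IH wts => //= t ts IHts [IHt IH] /andP[wt wts]; rewrite IHt // IHts.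
rewrite deltaS_quotient //.
elim: ts {IH} wts => //= t ts IHts /andP[wt wts] S.
by rewrite inE => /predU1P[->|]; [exact: saturated_Delta | exact: IHts].
Qed.

End QuotientAutomaton.

Theorem proposition6 (K : pzSemiRingType) (Sigma : finType) (ar : Sigma -> nat)
  (Q : finType) (nu : Q -> K) (delta : Q -> Sigma -> seq Q -> bool) (e : rel Q) :
  equivalence_rel e ->
  down_compatible ar delta e ->
  forall t : tree Sigma, wf ar t ->
    PA nu delta t = PA (@qnu K Q e nu) (@qdelta Sigma Q e delta) t.
Proof.
move=> e_equiv e_down t wt.
rewrite /PA /nuS (Delta_quotient e_equiv e_down wt).
exact: sum_saturated (saturated_Delta e_down wt).
Qed.
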